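(* Let $G=(X,\Sigma,\longrightarrow,X_0)$ (plant) and $R=(Z,\Sigma,\longrightarrow,Z_0)$ (specification) be automata. If $\mathit{SPR}(G,R)\neq\emptyset$, then $\mathcal{A}(E^{\uparrow}_{(G,R)})\in\mathit{MSPR}(G,R)$.
   Context: An automaton is a 4-tuple $A=(Q,\Sigma,\longrightarrow,Q_0)$ with state set $Q$, finite event set $\Sigma$, ${\longrightarrow}\subseteq Q\times\Sigma\times Q$ and $\emptyset\neq Q_0\subseteq Q$. Write $q\xrightarrow{\sigma}q'$ for $(q,\sigma,q')\in{\longrightarrow}$, $q\xrightarrow{\sigma}$ if some such $q'$ exists; extend to strings. A state is reachable if it is reached from an initial state by some string. Events are partitioned into uncontrollable $\Sigma_{uc}$ and controllable $\Sigma_c$; $\Sigma_r\subseteq\Sigma$ is a fixed set of required events. For a supervisor $S=(Y,\Sigma,\longrightarrow,Y_0)$, $S\|G=(Y\times X,\Sigma,\longrightarrow,Y_0\times X_0)$ with $(y,x)\xrightarrow{\sigma}(y',x')$ iff $y\xrightarrow{\sigma}y'$ and $x\xrightarrow{\sigma}x'$. $S$ is $\Sigma_{uc}$-admissible w.r.t. $G$ if for every reachable $(y,x)$ of $S\|G$ and $\sigma\in\Sigma_{uc}$, $x\xrightarrow{\sigma}$ implies $(y,x)\xrightarrow{\sigma}$. For automata $A_1=(Q_1,\Sigma,\longrightarrow,Q_{01})$, $A_2=(Q_2,\Sigma,\longrightarrow,Q_{02})$, $\Phi\subseteq Q_1\times Q_2$ is a simulation if (initial state) every $q_0\in Q_{01}$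 has $p_0\in Q_{02}$ with $(q_0,p_0)\in\Phi$, and (forward) for all $(q,p)\in\Phi$, $\sigma\in\Sigma$, $q\xrightarrow{\sigma}q'$ there is $p'$ with $p\xrightarrow{\sigma}p'$, $(q',p')\in\Phi$; it is a cc-simulation if moreover ($\Sigma_r$-backward) for all $(q,p)\in\Phi$, $\sigma\in\Sigma_r$, $p\xrightarrow{\sigma}p'$ there is $q'$ with $q\xrightarrow{\sigma}q'$, $(q',p')\in\Phi$. Write $A_1\sqsubseteq A_2$, $A_1\sqsubseteq_{cc}A_2$ if such relations exist. $\mathit{SPR}(G,R)$ is the set of $\Sigma_{uc}$-admissible supervisors $S$ with $S\|G\sqsubseteq_{cc}R$, and $\mathit{MSPR}(G,R)=\{S\in\mathit{SPR}(G,R):\forall S'\in\mathit{SPR}(G,R)\ (S'\|G\sqsubseteq S\|G)\}$. For $W,W'\subseteq X\times Z$, $\sigma\in\Sigma$: $\mathit{match}_{G,R}(W,\sigma,W')$ iff for all $(x,z)\in W$ and $x\xrightarrow{\sigma}x'$ there is $z'$ with $z\xrightarrow{\sigma}z'$ and $(x',z')\in W'$. Define $F_{(G,R)}:\wp(\wp(X\times Z))\to\wp(\wp(X\times Z))$ by: $W\in F_{(G,R)}(E)$ iff $W\in E$ and (1) for every $\sigma\in\Sigma_{uc}$ there is $W'\in E$ with $\mathit{match}_{G,R}(W,\sigma,W')$, and (2) for every $(x,z)\in W$, $\sigma\in\Sigma_r$, $z'$ with $z\xrightarrow{\sigma}z'$ there exist $x'\in X$, $W'\in E$ with $x\xrightarrow{\sigma}x'$,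 $(x',z')\in W'$ and $\mathit{match}_{G,R}(W,\sigma,W')$. $F_{(G,R)}$ is monotone and $E^{\uparrow}_{(G,R)}$ denotes its greatest fixpoint. For $E\subseteq\wp(X\times Z)$ let $E^*=\bigcup_{\widetilde W\in E}\wp(\widetilde W)$ and $\mathrm{Succ}_\sigma(W)=\bigcup_{(x,z)\in W}\{x':x\xrightarrow{\sigma}x'\}\times\{z':z\xrightarrow{\sigma}z'\}$. The automaton $\mathcal{A}(E)=(E^*,\Sigma,\longrightarrow,I_E)$ has $I_E=\{W_0\in E^*:\forall x_0\in X_0\,\exists z_0\in Z_0\,((x_0,z_0)\in W_0)\text{ and }W_0\subseteq X_0\times Z_0\}$ and $W\xrightarrow{\sigma}W'$ iff (i) there exist $(x,z)\in W$, $(x',z')\in W'$ with $x\xrightarrow{\sigma}x'$ and $z\xrightarrow{\sigma}z'$; (ii) $\mathit{match}_{G,R}(W,\sigma,W')$; (iii) $W'\subseteq\mathrm{Succ}_\sigma(W)$. *)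

From Stdlib Require Import Relations List.

Set Implicit Arguments.

(* Nonemptiness of the initial states is the separate
   predicate [is_automaton] (so that the construction A(E) can be defined
   before knowing that I_E is nonempty). *)
Record automaton (Sigma : Type) := Automaton {
  state : Type;
  trans : state -> Sigma -> state -> Prop;
  init : state -> Prop }.

Arguments state {Sigma} a.
Arguments trans {Sigma} a _ _ _.
Arguments init {Sigma} a _.

Definition is_automaton {Sigma} (A : automaton Sigma) : Prop :=
  exists q0, init A q0.

Definition step {Sigma} (A : automaton Sigma) (q q' : state A) : Prop :=
  exists s, trans A q s q'.

Definition reachable {Sigma} (A : automaton Sigma) (q : state A) : Prop :=
  exists q0, init A q0 /\ clos_refl_trans _ (step A) q0 q.

Definition sync {Sigma} (S G : automaton Sigma) : automaton Sigma :=
  {| state := (state S * state G)%type;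
     trans := fun p s p' => trans S (fst p) s (fst p') /\ trans G (snd p) s (snd p');
     init := fun p => init S (fst p) /\ init G (snd p) |}.

(* Sigma_uc-admissibility, uc = set of uncontrollable events *)
Definition admissible {Sigma} (uc : Sigma -> Prop) (S G : automaton Sigma) : Prop :=
  forall (p : state (sync S G)), reachable (sync S G) p ->
  forall s, uc s -> (exists x', trans G (snd p) s x') ->
  exists p', trans (sync S G) p s p'.

Definition is_simulation {Sigma} (A1 A2 : automaton Sigma)
  (Phi : state A1 -> state A2 -> Prop) : Prop :=
  (forall q0, init A1 q0 -> exists p0, init A2 p0 /\ Phi q0 p0) /\
  (forall q p, Phi q p -> forall s q', trans A1 q s q' ->
     exists p', trans A2 p s p' /\ Phi q' p').

Definition is_cc_simulation {Sigma} (r : Sigma -> Prop) (A1 A2 : automaton Sigma)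
  (Phi : state A1 -> state A2 -> Prop) : Prop :=
  is_simulation A1 A2 Phi /\
  (forall q p, Phi q p -> forall s, r s -> forall p', trans A2 p s p' ->
     exists q', trans A1 q s q' /\ Phi q' p').

Definition simulated {Sigma} (A1 A2 : automaton Sigma) : Prop :=
  exists Phi, is_simulation A1 A2 Phi.

Definition cc_simulated {Sigma} (r : Sigma -> Prop) (A1 A2 : automaton Sigma) : Prop :=
  exists Phi, is_cc_simulation r A1 A2 Phi.

Definition SPR {Sigma} (uc r : Sigma -> Prop) (G R S : automaton Sigma) : Prop :=
  is_automaton S /\ admissible uc S G /\ cc_simulated r (sync S G) R.

Definition MSPR {Sigma} (uc r : Sigma -> Prop) (G R S : automaton Sigma) : Prop :=
  SPR uc r G R S /\
  forall S' : automaton Sigma, SPR uc r G R S' -> simulated (sync S' G) (sync S G).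

Definition pset {Sigma} (G R : automaton Sigma) := (state G * state R -> Prop)%type.

Definition match_GR {Sigma} (G R : automaton Sigma)
  (W : pset G R) (s : Sigma) (W' : pset G R) : Prop :=
  forall x z, W (x, z) -> forall x', trans G x s x' ->
  exists z', trans R z s z' /\ W' (x', z').

Definition F_GR {Sigma} (uc r : Sigma -> Prop) (G R : automaton Sigma)
  (E : pset G R -> Prop) (W : pset G R) : Prop :=
  E W /\
  (forall s, uc s -> exists W', E W' /\ match_GR W s W') /\
  (forall x z, W (x, z) -> forall s, r s -> forall z', trans R z s z' ->
     exists x' W', trans G x s x' /\ E W' /\ W' (x', z') /\ match_GR W s W').

(* greatest fixpoint of the monotone operator F_GR (Knaster–Tarski:
   union of all post-fixpoints) *)
Definition E_up {Sigma} (uc r : Sigma -> Prop) (G R : automaton Sigma)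
  : pset G R -> Prop :=
  fun W => exists E : pset G R -> Prop,
    (forall W', E W' -> F_GR uc r E W') /\ E W.

Definition Estar {Sigma} (G R : automaton Sigma) (E : pset G R -> Prop)
  : pset G R -> Prop :=
  fun W => exists Wt, E Wt /\ (forall p, W p -> Wt p).

Definition Succ {Sigma} (G R : automaton Sigma) (s : Sigma) (W : pset G R)
  : pset G R :=
  fun p => exists x z, W (x, z) /\ trans G x s (fst p) /\ trans R z s (snd p).

Definition A_of {Sigma} (G R : automaton Sigma) (E : pset G R -> Prop)
  : automaton Sigma :=
  {| state := { W : pset G R | Estar E W };
     init := fun W =>
       (forall x0, init G x0 -> exists z0, init R z0 /\ proj1_sig W (x0, z0)) /\
       (forall x z, proj1_sig W (x, z) -> init G x /\ init R z);
     trans := fun W s W' =>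
       (exists x z x' z', proj1_sig W (x, z) /\ proj1_sig W' (x', z') /\
          trans G x s x' /\ trans R z s z') /\
       match_GR (proj1_sig W) s (proj1_sig W') /\
       (forall p, proj1_sig W' p -> Succ s (proj1_sig W) p) |}.
Arguments A_of {Sigma} G R E.
Arguments E_up {Sigma} uc r G R _.

From Stdlib Require Import Relations Classical.

(* A supervisor S in SPR(G,R), with a cc-simulation Phi of S||G by R, yields the
   family of sets W_y = {(x,z) | (y,x) reachable in S||G and Phi((y,x),z)}; it is a
   post-fixpoint of F, hence lies in E^up.  Conversely E^up is itself a
   post-fixpoint, and for a state W of A(E^up) contained in some W~ in E^up the
   fixpoint conditions supply, for each uncontrollable or required event s, a set
   W'' in E^up matched by W, which A(E^up) realises as the transition to
   W'' ∩ Succ_s(W).  Hence A(E^up) is admissible and cc-simulated by membership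
   (x,z) ∈ W, and any S||G is simulated by A(E^up)||G by pairing (y,x) with
   states W ⊆ W_y. *)

Section Reachability.
Context {Sigma : Type} (A : automaton Sigma).

Lemma reachable_init q : init A q -> reachable A q.
Proof. intros Hq. exists q. split; [exact Hq | apply rt_refl]. Qed.

Lemma reachable_trans q s q' : reachable A q -> trans A q s q' -> reachable A q'.
Proof.
  intros [q0 [Hq0 Hr]] Ht. exists q0. split; [exact Hq0 |].
  apply rt_trans with q; [exact Hr | apply rt_step; exists s; exact Ht].
Qed.

End Reachability.

Section Construction.
Context {Sigma : Type} (uc r : Sigma -> Prop) {G R : automaton Sigma}.

Definition post_fixpoint (E : pset G R -> Prop) : Prop :=
  forall W, E W -> F_GR uc r E W.

Lemma match_GR_sub {W1 W2 W' : pset G R} {s} :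
  (forall p, W1 p -> W2 p) -> match_GR W2 s W' -> match_GR W1 s W'.
Proof. intros Hsub Hm x z Hxz. apply Hm, Hsub, Hxz. Qed.

Lemma F_GR_mono (E E' : pset G R -> Prop) W :
  (forall W', E W' -> E' W') -> F_GR uc r E W -> F_GR uc r E' W.
Proof.
  intros Hsub [HW [Huc Hr]]. split; [| split].
  - apply Hsub, HW.
  - intros s Hs. destruct (Huc s Hs) as [W' [HW' Hm]].
    exists W'. split; [apply Hsub, HW' | exact Hm].
  - intros x z Hxz s Hs z' Hz.
    destruct (Hr x z Hxz s Hs z' Hz) as [x' [W' [Hx [HW' [Hin Hm]]]]].
    exists x', W'. split; [exact Hx | split; [apply Hsub, HW' | split; assumption]].
Qed.

Lemma E_up_post_fixpoint : post_fixpoint (E_up uc r G R).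
Proof.
  intros W [E [HE HW]]. apply F_GR_mono with E.
  - intros W' HW'. exists E. split; assumption.
  - apply HE, HW.
Qed.

Section Automaton.
Context {E : pset G R -> Prop}.

Lemma A_of_init_exists {W0} :
  E W0 ->
  (forall x0, init G x0 -> exists z0, init R z0 /\ W0 (x0, z0)) ->
  exists Q0 : state (A_of G R E),
    init (A_of G R E) Q0 /\ forall p, proj1_sig Q0 p -> W0 p.
Proof.
  intros HW0 Hcover.
  unshelve eexists (exist _ (fun p => W0 p /\ init G (fst p) /\ init R (snd p)) _).
  { exists W0. split; [exact HW0 | intros p Hp; apply Hp]. }
  split; [split |]; simpl.
  - intros x0 Hx0. destruct (Hcover x0 Hx0) as [z0 [Hz0 Hin]].
    exists z0. split; [exact Hz0 | split; [exact Hin | split; assumption]].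
  - intros x z Hxz. apply Hxz.
  - intros p Hp. apply Hp.
Qed.

Lemma A_of_step {W : state (A_of G R E)} {s W'' x z x' z'} :
  E W'' -> match_GR (proj1_sig W) s W'' ->
  proj1_sig W (x, z) -> trans G x s x' -> trans R z s z' -> W'' (x', z') ->
  exists W' : state (A_of G R E),
    trans (A_of G R E) W s W' /\ proj1_sig W' (x', z') /\
    forall p, proj1_sig W' p -> W'' p.
Proof.
  intros HW'' Hm Hxz Hx Hz Hin.
  unshelve eexists (exist _ (fun p => W'' p /\ Succ s (proj1_sig W) p) _).
  { exists W''. split; [exact HW'' | intros p Hp; apply Hp]. }
  simpl. split; [split; [| split] | split].
  - exists x, z, x', z'. repeat split; try assumption. exists x, z. auto.
  - intros x1 z1 H1 x1' Hx1. destruct (Hm x1 z1 H1 x1' Hx1) as [z1' [Hz1 Hin1]].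
    exists z1'. split; [exact Hz1 | split; [exact Hin1 |]]. exists x1, z1. auto.
  - intros p Hp. apply Hp.
  - split; [exact Hin |]. exists x, z. auto.
  - intros p Hp. apply Hp.
Qed.

Lemma A_of_sync_step_covered {q q'} :
  step (sync (A_of G R E) G) q q' ->
  (exists z, proj1_sig (fst q) (snd q, z)) -> exists z, proj1_sig (fst q') (snd q', z).
Proof.
  intros [s [[_ [Hm _]] Hx]] [z Hz].
  destruct (Hm _ _ Hz _ Hx) as [z' [_ Hz']]. exists z'. exact Hz'.
Qed.

Lemma A_of_sync_reachable_covered {q} :
  reachable (sync (A_of G R E) G) q -> exists z, proj1_sig (fst q) (snd q, z).
Proof.
  intros [q0 [[[Hcover _] Hx0] Hr]].
  assert (Hq0 : exists z, proj1_sig (fst q0) (snd q0, z)).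
  { destruct (Hcover _ Hx0) as [z [_ Hz]]. exists z. exact Hz. }
  clear Hcover Hx0. induction Hr; eauto using A_of_sync_step_covered.
Qed.

Hypothesis HE : post_fixpoint E.

Lemma A_of_admissible : admissible uc (A_of G R E) G.
Proof.
  intros [W x] Hreach s Hs [x' Hx]. simpl in Hx.
  destruct (A_of_sync_reachable_covered Hreach) as [z Hz]. simpl in Hz.
  destruct (proj2_sig W) as [Wt [HWt Hsub]].
  destruct (HE _ HWt) as [_ [Huc _]]. destruct (Huc s Hs) as [W'' [HW'' Hm]].
  apply (match_GR_sub Hsub) in Hm.
  destruct (Hm x z Hz x' Hx) as [z' [Hz' Hin]].
  destruct (A_of_step HW'' Hm Hz Hx Hz' Hin) as [W' [HW' _]].
  exists (W', x'). split; assumption.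
Qed.

Lemma A_of_cc_simulation :
  is_cc_simulation r (sync (A_of G R E) G) R (fun q z => proj1_sig (fst q) (snd q, z)).
Proof.
  split; [split |].
  - intros [W0 x0] [[Hcover _] Hx0]. simpl in *.
    destruct (Hcover x0 Hx0) as [z0 [Hz0 Hin]]. exists z0. split; assumption.
  - intros [W x] z Hz s [W' x'] [[_ [Hm _]] Hx]. simpl in *.
    destruct (Hm x z Hz x' Hx) as [z' [Hz' Hin]]. exists z'. split; assumption.
  - intros [W x] z Hz s Hs z' Hz'. simpl in *.
    destruct (proj2_sig W) as [Wt [HWt Hsub]].
    destruct (HE _ HWt) as [_ [_ Hreq]].
    destruct (Hreq x z (Hsub _ Hz) s Hs z' Hz') as [x' [W'' [Hx [HW'' [Hin Hm]]]]].
    apply (match_GR_sub Hsub) in Hm.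
    destruct (A_of_step HW'' Hm Hz Hx Hz' Hin) as [W' [HW' [Hin' _]]].
    exists (W', x'). split; [split |]; assumption.
Qed.

End Automaton.

Section Supervisor.
Context {S : automaton Sigma} {Phi : state (sync S G) -> state R -> Prop}.

Definition W_of (y : state S) : pset G R :=
  fun p => reachable (sync S G) (y, fst p) /\ Phi (y, fst p) (snd p).

Hypothesis Hsim : is_simulation (sync S G) R Phi.

Lemma W_of_match {y s y'} : trans S y s y' -> match_GR (W_of y) s (W_of y').
Proof.
  intros Hy x z [Hreach Hxz] x' Hx.
  assert (Hstep : trans (sync S G) (y, x) s (y', x')) by (split; assumption).
  destruct (proj2 Hsim _ _ Hxz _ _ Hstep) as [z' [Hz' Hxz']].
  exists z'. split; [exact Hz' | split; [apply reachable_trans with (y, x) s |]; assumption].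
Qed.

Lemma W_of_init_cover {y0} :
  init S y0 -> forall x0, init G x0 -> exists z0, init R z0 /\ W_of y0 (x0, z0).
Proof.
  intros Hy0 x0 Hx0.
  assert (Hinit : init (sync S G) (y0, x0)) by (split; assumption).
  destruct (proj1 Hsim _ Hinit) as [z0 [Hz0 Hxz0]].
  exists z0. split; [exact Hz0 | split; [apply reachable_init |]; assumption].
Qed.

Hypothesis Hadm : admissible uc S G.
Hypothesis Hback : forall q z, Phi q z -> forall s, r s -> forall z', trans R z s z' ->
  exists q', trans (sync S G) q s q' /\ Phi q' z'.

(* Where S blocks an uncontrollable event, admissibility forces G to block it too,
   so W_y itself serves as the matched successor. *)
Lemma W_of_post_fixpoint : post_fixpoint (fun W => exists y, W = W_of y).
Proof.
  intros W [y ->]. split; [exists y; reflexivity | split].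
  - intros s Hs. destruct (classic (exists y', trans S y s y')) as [[y' Hy] | Hblock].
    + exists (W_of y'). split; [exists y'; reflexivity | apply W_of_match, Hy].
    + exists (W_of y). split; [exists y; reflexivity |].
      intros x z [Hreach _] x' Hx. exfalso.
      destruct (Hadm _ Hreach s Hs (ex_intro _ x' Hx)) as [[y' x''] [Hy _]].
      apply Hblock. exists y'. exact Hy.
  - intros x z [Hreach Hxz] s Hs z' Hz.
    destruct (Hback _ _ Hxz s Hs _ Hz) as [[y' x'] [[Hy Hx] Hxz']]. simpl in *.
    exists x', (W_of y'). split; [exact Hx | split; [exists y'; reflexivity | split]].
    + split; [apply reachable_trans with (y, x) s; [| split] |]; assumption.
    + apply W_of_match, Hy.
Qed.

Lemma W_of_in_E_up y : E_up uc r G R (W_of y).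
Proof.
  exists (fun W => exists y, W = W_of y).
  split; [exact W_of_post_fixpoint | exists y; reflexivity].
Qed.

End Supervisor.
Arguments W_of S Phi y : clear implicits.

Lemma A_of_simulates (E : pset G R -> Prop) (S : automaton Sigma) Phi :
  is_simulation (sync S G) R Phi -> (forall y, E (W_of S Phi y)) ->
  simulated (sync S G) (sync (A_of G R E) G).
Proof.
  intros Hsim HE.
  exists (fun q a => snd a = snd q /\
            (forall p, proj1_sig (fst a) p -> W_of S Phi (fst q) p) /\
            exists z, proj1_sig (fst a) (snd q, z)).
  split.
  - intros [y0 x0] [Hy0 Hx0]. simpl in *.
    destruct (A_of_init_exists (HE y0) (W_of_init_cover Hsim Hy0)) as [Q0 [HQ0 Hsub]].
    destruct (proj1 HQ0 x0 Hx0) as [z0 [_ Hz0]].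
    exists (Q0, x0). split; [split; assumption |].
    split; [reflexivity | split; [exact Hsub | exists z0; exact Hz0]].
  - intros [y x] [Q x1] [Heq [Hsub [z Hz]]] s [y' x'] [Hy Hx]. simpl in *. subst x1.
    destruct (Hsub _ Hz) as [Hreach Hxz].
    destruct (proj2 Hsim _ _ Hxz s (y', x') (conj Hy Hx)) as [z' [Hz' Hxz']].
    assert (Hin : W_of S Phi y' (x', z')).
    { split; [apply reachable_trans with (y, x) s; [| split] |]; assumption. }
    pose proof (match_GR_sub Hsub (W_of_match Hsim Hy)) as Hm.
    destruct (A_of_step (HE y') Hm Hz Hx Hz' Hin) as [Q' [HQ' [Hin' Hsub']]].
    exists (Q', x'). split; [split; assumption |].
    split; [reflexivity | split; [exact Hsub' | exists z'; exact Hin']].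
Qed.

End Construction.

Theorem theorem2 (Sigma : Type) (Sigma_finite : exists l : list Sigma, forall s, List.In s l)
  (uc r : Sigma -> Prop) (G R : automaton Sigma)
  (HG : is_automaton G) (HR : is_automaton R) :
  (exists S : automaton Sigma, SPR uc r G R S) ->
  MSPR uc r G R (A_of G R (E_up uc r G R)).
Proof.
  intros [S [[y0 Hy0] [Hadm [Phi [Hsim Hback]]]]].
  assert (HE : post_fixpoint uc r (E_up uc r G R)) by apply E_up_post_fixpoint.
  split; [split; [| split] |].
  - destruct (A_of_init_exists (W_of_in_E_up uc r Hsim Hadm Hback y0)
                                 (W_of_init_cover Hsim Hy0)) as [Q0 [HQ0 _]].
    exists Q0. exact HQ0.
  - exact (A_of_admissible uc r HE).
  - eexists. exact (A_of_cc_simulation uc r HE).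
  - intros S' [_ [Hadm' [Phi' [Hsim' Hback']]]].
    apply A_of_simulates with Phi'; [exact Hsim' |].
    exact (W_of_in_E_up uc r Hsim' Hadm' Hback').
Qed.
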